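(* Let $P$ be a finite non-abelian $p$-group, $p$ a prime. Then $P$ is exponent-critical and has more than one abelian maximal subgroup (i.e. $P$ is of type $\mathcal{B}$) if and only if $P$ is $2$-generated and its derived subgroup $P'$ has order $p$.
   Context: A finite group $G$ is exponent-critical if $\exp(G)$ is not the least common multiple of the exponents of the proper non-abelian subgroups of $G$. An exponent-critical $p$-group is said to be of type $\mathcal{B}$ if it has more than one abelian maximal subgroup. *)

From mathcomp Require Import all_boot all_fingroup all_solvable.
Set Implicit Arguments. Unset Strict Implicit. Unset Printing Implicit Defensive.
Local Open Scope group_scope.

Definition lcm_exp_proper_nonabelian (gT : finGroupType) (G : {group gT}) : nat :=
  \big[lcmn/1%N]_(H : {group gT} | (H \proper G) && ~~ abelian H) exponent H.

Definition exponent_critical (gT : finGroupType) (G : {group gT}) : Prop :=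
  exponent G <> lcm_exp_proper_nonabelian G.

Definition n_abelian_maximal (gT : finGroupType) (G : {group gT}) : nat :=
  #|[set M : {group gT} | maximal M G && abelian M]|.

Definition type_B (gT : finGroupType) (G : {group gT}) : Prop :=
  exponent_critical G /\ (1 < n_abelian_maximal G)%N.

Definition two_generated (gT : finGroupType) (G : {group gT}) : Prop :=
  exists x y : gT, (G : {set gT}) = <<[set x; y]>>.

From mathcomp Require Import all_boot all_fingroup all_solvable.
Set Implicit Arguments.
Unset Strict Implicit.
Unset Printing Implicit Defensive.
Local Open Scope group_scope.

(* If P is not 2-generated, each non-commuting pair of elements generates a
   proper non-abelian subgroup, and these subgroups already realise exp P.
   Two distinct abelian maximal subgroups generate P, so they put 'Phi(P) in
   'Z(P); for P = <x, y> this gives P' = <[x, y]> with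
   [x, y]^p = [x^p, y] = 1. Conversely |P'| = p puts P' and all p-th powers,
   hence 'Phi(P), in 'Z(P); each maximal subgroup M then has M / 'Phi(P) of
   order p, so M is abelian, and the maximal subgroups through x and through
   y are distinct. *)

Section ExponentCritical.

Variables (gT : finGroupType) (G : {group gT}).

Lemma lcm_exp_proper_nonabelian_dvdn :
  lcm_exp_proper_nonabelian G %| exponent G.
Proof.
by apply/dvdn_biglcmP => H /andP[/proper_sub sHG _]; apply: exponentS.
Qed.

Lemma exponent_critical_proper_abelian :
  ~~ abelian G -> (forall H : {group gT}, H \proper G -> abelian H) ->
  exponent_critical G.
Proof.
move=> nabG abH; rewrite /exponent_critical /lcm_exp_proper_nonabelian.
rewrite big_pred0 => [eG1|H]; last by case: (boolP (H \proper G)) => // /abH ->.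
have /eqP G1 : G :==: 1 by rewrite trivg_exponent eG1.
by rewrite G1 abelian1 in nabG.
Qed.

Section NotTwoGenerated.

Hypothesis not2gen : forall x y : gT, G :!=: <<[set x; y]>>.

Lemma order_dvdn_lcm_noncommuting x y :
  x \in G -> y \in G -> y \notin 'C[x] -> #[x] %| lcm_exp_proper_nonabelian G.
Proof.
move=> Gx Gy ncxy; set H := <<[set x; y]>>%G.
have Hx : x \in H by rewrite mem_gen ?set21.
have sHG : H \subset G by rewrite gen_subG subUset !sub1set Gx Gy.
apply: (biglcmn_sup H) (dvdn_exponent Hx).
rewrite /= properEneq sHG eq_sym not2gen /=; apply: contra ncxy => cHH.
by apply/cent1P; apply: (centsP cHH); rewrite ?mem_gen ?set21 ?set22.
Qed.

(* A central g is reached through a non-commuting pair a, b: g * a does not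
   commute with b either, and (g * a) ^+ n = g ^+ n * a ^+ n. *)
Lemma exponent_eq_lcm_not_two_generated :
  ~~ abelian G -> exponent G = lcm_exp_proper_nonabelian G.
Proof.
move=> nabG; apply/eqP; rewrite eqn_dvd lcm_exp_proper_nonabelian_dvdn andbT.
apply/exponentP => g Gg; apply/eqP; rewrite -order_dvdn.
have [cGg | ncGg] := boolP (g \in 'C(G)); last first.
  have [h Gh nch] : exists2 h, h \in G & h \notin 'C[g].
    by apply/subsetPn; rewrite sub_cent1.
  exact: order_dvdn_lcm_noncommuting nch.
have [a Ga ncGa] : exists2 a, a \in G & a \notin 'C(G).
  by apply/subsetPn; rewrite -abelianE.
have [b Gb ncab] : exists2 b, b \in G & b \notin 'C[a].
  by apply/subsetPn; rewrite sub_cent1.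
have cga : commute g a by apply: (centP cGg).
have gCb : g \in 'C[b] by rewrite cent1C (subsetP _ b Gb) // sub_cent1.
have ncgab : b \notin 'C[g * a] by rewrite cent1C groupMl // cent1C.
have := order_dvdn_lcm_noncommuting (groupM Gg Ga) Gb ncgab.
have := order_dvdn_lcm_noncommuting Ga Gb ncab.
by rewrite !order_dvdn expgMn // => /eqP->; rewrite mulg1.
Qed.

End NotTwoGenerated.

Lemma exponent_critical_two_generated :
  ~~ abelian G -> exponent_critical G -> two_generated G.
Proof.
move=> nabG crit.
have [/existsP[x /existsP[y /eqP defG]] | /existsPn not2gen] :=
  boolP [exists x, exists y, G :==: <<[set x; y]>>]; first by exists x, y.
case: crit; apply: exponent_eq_lcm_not_two_generated => // x y.
by have /existsPn := not2gen x.
Qed.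

End ExponentCritical.

Section Gen2.

Variables (gT : finGroupType) (G : {group gT}) (x y : gT).
Hypothesis defG : G :=: <<[set x; y]>>.

Lemma mem_gen2l : x \in G. Proof. by rewrite defG mem_gen ?set21. Qed.
Lemma mem_gen2r : y \in G. Proof. by rewrite defG mem_gen ?set22. Qed.

Lemma gen2_subG (H : {group gT}) : (G \subset H) = (x \in H) && (y \in H).
Proof. by rewrite defG gen_subG subUset !sub1set. Qed.

Lemma index_gen2_leq (K : {group gT}) n : 0 < n ->
  K <| G -> G^`(1) \subset K -> x ^+ n \in K -> y ^+ n \in K ->
  #|G : K| <= n * n.
Proof.
move=> n_gt0 /andP[sKG nKG] sG'K xnK ynK.
have nKx : x \in 'N(K) := subsetP nKG x mem_gen2l.
have nKy : y \in 'N(K) := subsetP nKG y mem_gen2r.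
set a := coset K x; set b := coset K y.
have cab : commute a b.
  apply: (centsP (sub_der1_abelian sG'K)); apply: mem_quotient.
    exact: mem_gen2l.
  exact: mem_gen2r.
have defGK : G / K = <[a]> * <[b]>.
  rewrite -cent_joinEl; last by rewrite cent_cycle cycle_subG; apply/cent1P.
  rewrite [in G / K]defG quotient_gen; last by rewrite -gen_subG -defG.
  by rewrite quotientU !quotient_set1 // joing_idl joing_idr.
have ord_leq z : z ^+ n \in K -> z \in 'N(K) -> #[coset K z] <= n.
  by move=> znK nKz; rewrite dvdn_leq // order_dvdn -morphX //= coset_id.
rewrite -(card_quotient nKG) defGK.
apply: leq_trans (leq_mul (ord_leq x xnK nKx) (ord_leq y ynK nKy)).
by rewrite /order mul_cardG leq_pmulr ?cardG_gt0.
Qed.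

Lemma n_abelian_maximal_gen2_gt1 :
  ~~ cyclic G -> (forall M : {group gT}, maximal M G -> abelian M) ->
  1 < n_abelian_maximal G.
Proof.
move=> ncycG abM.
have maximal_over z : z \in G -> exists2 M : {group gT}, maximal M G & z \in M.
  move=> Gz; have sZG : <[z]> \subset G by rewrite cycle_subG.
  have [defZ | [M maxM sZM]] := maximal_exists sZG.
    by rewrite -defZ cycle_cyclic in ncycG.
  by exists M; rewrite -?cycle_subG.
have [M1 maxM1 xM1] := maximal_over x mem_gen2l.
have [M2 maxM2 yM2] := maximal_over y mem_gen2r.
apply/card_gt1P; exists M1, M2; rewrite !inE maxM1 maxM2 !abM //; split=> //.
apply: contraTneq (maxgroupp maxM1) => eqM12.
by rewrite properE gen2_subG xM1 eqM12 yM2 andbF.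
Qed.

End Gen2.

Lemma Phi_sub_center_abelian_maximal (gT : finGroupType) (G A B : {group gT}) :
  maximal A G -> maximal B G -> A != B -> abelian A -> abelian B ->
  'Phi(G) \subset 'Z(G).
Proof.
move=> maxA maxB neAB abA abB.
have defG : A <*> B = G.
  have sABG : A <*> B \subset G.
    by rewrite join_subG !proper_sub ?(maxgroupp maxA) ?(maxgroupp maxB).
  have [// | prABG] := eqVproper sABG.
  have sBA : B \subset A.
    by rewrite -((maxgroupP maxA).2 _ prABG (joing_subl A B)) joing_subr.
  move: neAB; rewrite -val_eqE /=.
  by rewrite ((maxgroupP maxB).2 _ (maxgroupp maxA) sBA) eqxx.
have centG : 'C(G) = 'C(A) :&: 'C(B) by rewrite -defG centY.
rewrite /center subsetI Phi_sub centG subsetI.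
have sPhiCA := subset_trans (Phi_sub_max maxA) abA.
by rewrite sPhiCA (subset_trans (Phi_sub_max maxB)).
Qed.

Lemma pgroup_cyclic_card_leq (gT : finGroupType) p (H : {group gT}) :
  prime p -> p.-group H -> #|H| <= p -> cyclic H.
Proof.
move=> p_pr pH leHp; have [-> | ntH] := eqsVneq H 1; first exact: cyclic1.
have [_ p_dvd_H _] := pgroup_pdiv pH ntH.
apply: prime_cyclic; suff -> : #|H| = p by [].
by apply/eqP; rewrite eqn_leq leHp dvdn_leq.
Qed.

Section FrattiniCentral.

Variables (gT : finGroupType) (p : nat) (P : {group gT}).
Hypotheses (p_pr : prime p) (pP : p.-group P).

Lemma expg_prime_Phi g : g \in P -> g ^+ p \in 'Phi(P).
Proof.
move=> Pg; rewrite (Phi_joing pP) (subsetP (joing_subr _ _)) // -[p]expn1.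
exact: Mho_p_elt (mem_p_elt pP Pg).
Qed.

Lemma der1_sub_Phi : P^`(1) \subset 'Phi(P).
Proof. by rewrite (Phi_joing pP) joing_subl. Qed.

Lemma Phi_sub_center_der1 :
  P^`(1) \subset 'Z(P) -> exponent P^`(1) %| p -> 'Phi(P) \subset 'Z(P).
Proof.
move=> sP'Z expP'.
rewrite (Phi_joing pP) join_subG sP'Z (MhoE 1 pP) gen_subG expn1.
apply/subsetP=> _ /imsetP[g Pg ->]; apply/centerP; split; first exact: groupX.
move=> h Ph; have P'gh : [~ g, h] \in P^`(1) by apply: mem_commg.
have /centerP[_ cPgh] := subsetP sP'Z _ P'gh.
by apply/commgP; rewrite commXg ?(exponentP expP') //; apply/commute_sym/cPgh.
Qed.

Section Gen2FrattiniCentral.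

Variables x y : gT.
Hypotheses (defP : P :=: <<[set x; y]>>) (sPhiZ : 'Phi(P) \subset 'Z(P)).

Lemma card_der1_dvdn_gen2 : #|P^`(1)| %| p.
Proof.
have Px := mem_gen2l defP; have Py := mem_gen2r defP.
set c := [~ x, y].
have P'c : c \in P^`(1) by apply: mem_commg.
have /centerP[_ cPc] := subsetP sPhiZ _ (subsetP der1_sub_Phi _ P'c).
have /centerP[_ cPxp] := subsetP sPhiZ _ (expg_prime_Phi Px).
have defP2 : P :=: <[x]> <*> <[y]> by rewrite joing_idl joing_idr.
have -> : P^`(1) = <[c]>.
  by rewrite defP2; apply: der1_joing_cycles; rewrite -defP2; apply/centP.
rewrite -orderE order_dvdn /c -commXg; last exact/commute_sym/cPc.
by apply/commgP/cPxp.
Qed.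

Lemma maximal_abelian_gen2 (M : {group gT}) : maximal M P -> abelian M.
Proof.
move=> maxM; have sMP := proper_sub (maxgroupp maxM).
have sPhiM := Phi_sub_max maxM.
apply: (@cyclic_factor_abelian _ 'Phi(P)).
  rewrite /center subsetI sPhiM (subset_trans sPhiZ) //.
  exact: subset_trans (subsetIr _ _) (centS sMP).
have nPhiM : M \subset 'N('Phi(P)) by rewrite (subset_trans sMP) ?gFnorm.
apply: pgroup_cyclic_card_leq (quotient_pgroup _ (pgroupS sMP pP)) _ => //.
rewrite card_quotient // -(leq_pmul2l (prime_gt0 p_pr)).
rewrite -{1}(p_maximal_index pP maxM) Lagrange_index //.
apply: index_gen2_leq defP _ _ (prime_gt0 p_pr) (Phi_normal P) der1_sub_Phi _ _.
  exact: expg_prime_Phi (mem_gen2l defP).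
exact: expg_prime_Phi (mem_gen2r defP).
Qed.

Lemma proper_abelian_gen2 (H : {group gT}) : H \proper P -> abelian H.
Proof.
move=> prH; have [eqHP | [M maxM sHM]] := maximal_exists (proper_sub prH).
  by rewrite eqHP properE subxx in prH.
exact: abelianS sHM (maximal_abelian_gen2 maxM).
Qed.

End Gen2FrattiniCentral.

End FrattiniCentral.

Unset Implicit Arguments.

Theorem theoremD (gT : finGroupType) (P : {group gT}) (p : nat) :
  prime p -> p.-group P -> ~~ abelian P ->
  (type_B P <-> two_generated P /\ #|P^`(1)| = p).
Proof.
move=> p_pr pP nabP.
have ntP' : P^`(1) :!=: 1 by apply: contra nabP => /eqP/derG1P.
split.
- case=> crit /card_gt1P[A [B [+ + neAB]]].
  rewrite !inE => /andP[maxA abA] /andP[maxB abB].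
  have [x [y defP]] := exponent_critical_two_generated nabP crit.
  split; first by exists x, y.
  have sPhiZ := Phi_sub_center_abelian_maximal maxA maxB neAB abA abB.
  apply/(prime_nt_dvdP p_pr); first by rewrite -trivg_card1.
  exact: (card_der1_dvdn_gen2 pP defP sPhiZ).
- case=> [[x [y defP]] cardP'].
  have sP'Z : P^`(1) \subset 'Z(P).
    apply: prime_meetG; first by rewrite cardP'.
    exact: meet_center_nil (pgroup_nil pP) (der_normal 1 P) ntP'.
  have expP' : exponent P^`(1) %| p by rewrite -cardP' exponent_dvdn.
  have sPhiZ := Phi_sub_center_der1 pP sP'Z expP'.
  split.
    apply: exponent_critical_proper_abelian nabP _.
    exact: (proper_abelian_gen2 p_pr pP defP sPhiZ).
  apply: (n_abelian_maximal_gen2_gt1 defP).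
    by apply: contra nabP; apply: cyclic_abelian.
  exact: (maximal_abelian_gen2 p_pr pP defP sPhiZ).
Qed.
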